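(* The functor $G=P\circ P_+\big|_\Omega:\Omega\rightarrow\Sigma$ is injective on objects and morphisms. Thus, there exists an $\Omega$ category $G\Omega$ having the functor $G$ with the target category restricted from $\Sigma$ to $G\Omega$ as its stalk isofunctor. Furthermore, $G\Omega$ is a non monoidal subcategory of $\Sigma$.
   Context: $\Sigma$ is the category of finite sets and functions; $\Omega$ is its full subcategory of finite von Neumann ordinals $[l]=\{0,\dots,l-1\}$ ($[0]=\emptyset$), strict monoidal with $[l]\smile[m]=[l+m]$, $f\smile g(i)=f(i)$ for $i\in[l]$ and $g(i-l)+p$ for $i\in[m]+l$ (for $f:[l]\to[p]$, $g:[m]\to[q]$), unit $[0]$. $P:\Sigma\to\Sigma$ is the finite power set endofunctor ($PA$ the set of subsets of $A$, $P\phi(X)=\phi(X)$), and $P_+:\Sigma\to\Sigma$ the non empty power set endofunctor ($P_+A$ the set of non empty subsets, $P_+\phi(X)=\phi(X)$). An $\Omega$ category is a Pro category $D\Omega$ with a strict monoidal isofunctor (stalk isofunctor) $D:\Omega\to D\Omega$; given a functor $D$ injective on objects and morphisms, the $\Omega$ category $D\Omega$ has objects $D[l]$, morphisms $Df$, composition $Dg\circ Df=D(g\circ f)$, identities $D\,\mathrm{id}_{[l]}$, monoidal products $D[l]\smile D[m]=D([l]\smile[m])$, $Df\smile Dg=D(f\smile g)$ and unit $D[0]$. *)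

From HB Require Import structures.
From mathcomp Require Import all_boot all_order.
From mathcomp Require Import finmap.
Set Implicit Arguments. Unset Strict Implicit. Unset Printing Implicit Defensive.
Local Open Scope fset_scope.

(* Finite sets of Sigma are modelled as finite sets [{fset T}] over an ambient
   choiceType; a Sigma-morphism A -> B is a function T -> U considered on A. *)

Definition vn_ord (l : nat) : {fset nat} := [fset i | i in iota 0 l].

Definition Pobj (T : choiceType) (A : {fset T}) : {fset {fset T}} := fpowerset A.
Definition Pmor (T U : choiceType) (phi : T -> U) : {fset T} -> {fset U} :=
  fun X => phi @` X.

Definition Pplus_obj (T : choiceType) (A : {fset T}) : {fset {fset T}} :=
  [fset X in fpowerset A | X != fset0].
Definition Pplus_mor (T U : choiceType) (phi : T -> U) : {fset T} -> {fset U} :=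
  fun X => phi @` X.

(* A morphism f : [l] -> [p] of Omega, seen as a function on the ambient type nat
   (its values outside [l] are irrelevant). *)
Definition omega_fun (l p : nat) (f : 'I_l -> 'I_p) : nat -> nat :=
  fun i => odflt i (omap (fun j : 'I_l => nat_of_ord (f j)) (insub i)).

Definition G_obj (l : nat) : {fset {fset {fset nat}}} := Pobj (Pplus_obj (vn_ord l)).
Definition G_mor (l p : nat) (f : 'I_l -> 'I_p) :
  {fset {fset nat}} -> {fset {fset nat}} := Pmor (Pplus_mor (omega_fun f)).

From HB Require Import structures.
From mathcomp Require Import all_boot all_order.
From mathcomp Require Import finmap.
Local Open Scope fset_scope.

Set Implicit Arguments. Unset Strict Implicit.

(* Functoriality of G is inherited from that of P and P_+, because a morphism
   f : [l] -> [p] of Omega maps [l] into [p].  G[l] has 2^(2^l - 1) elements,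
   which separates the objects and shows that G[1+1] (8 elements) is neither
   G[1] + G[1] nor G[1] x G[1] (4 elements).  Finally G f sends the element
   {{i}} of G[l] to {{f i}}, so G f determines f. *)

Lemma in_vn_ord i l : (i \in vn_ord l) = (i < l)%N.
Proof. by rewrite /vn_ord in_fset /= mem_iota. Qed.

Lemma card_vn_ord l : #|` vn_ord l| = l.
Proof. by rewrite /vn_ord card_fseq undup_id ?iota_uniq // size_iota. Qed.

Lemma in_Pobj (T : choiceType) (A X : {fset T}) : (X \in Pobj A) = (X `<=` A).
Proof. exact: fpowersetE. Qed.

Lemma in_Pplus_obj (T : choiceType) (A X : {fset T}) :
  (X \in Pplus_obj A) = (X `<=` A) && (X != fset0).
Proof. by rewrite /Pplus_obj !inE /= fpowersetE. Qed.

Lemma card_Pplus_obj (T : choiceType) (A : {fset T}) :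
  #|` Pplus_obj A| = (2 ^ #|` A| - 1)%N.
Proof.
rewrite -card_fpowerset (cardfsD1 fset0 (fpowerset A)) fpowersetE fsub0set.
rewrite add1n subn1 /=; congr #|` _|; apply/fsetP => X.
by rewrite in_fsetD1 in_Pplus_obj fpowersetE andbC.
Qed.

Section PowerSetFunctors.

Variables T U V : choiceType.

Lemma Pplus_morE (phi : T -> U) : Pplus_mor phi = Pmor phi.
Proof. by []. Qed.

Lemma Pmor_homo (A : {fset T}) (B : {fset U}) (phi : T -> U) :
  {homo phi : x / x \in A >-> x \in B} ->
  {homo Pmor phi : X / X \in Pobj A >-> X \in Pobj B}.
Proof.
move=> phiAB X; rewrite !in_Pobj => /fsubsetP XA.
by apply/fsubsetP => _ /imfsetP [/= x /XA xA ->]; apply: phiAB.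
Qed.

Lemma Pplus_mor_homo (A : {fset T}) (B : {fset U}) (phi : T -> U) :
  {homo phi : x / x \in A >-> x \in B} ->
  {homo Pplus_mor phi : X / X \in Pplus_obj A >-> X \in Pplus_obj B}.
Proof.
move=> phiAB X; rewrite !in_Pplus_obj => /andP [XA /fset0Pn [x xX]].
apply/andP; split; first by rewrite -in_Pobj (Pmor_homo phiAB) ?in_Pobj.
by apply/fset0Pn; exists (phi x); apply: in_imfset.
Qed.

Lemma Pmor_id_in (phi : T -> T) (X : {fset T}) :
  {in X, phi =1 id} -> Pmor phi X = X.
Proof. by move=> phi_id; rewrite -[RHS]imfset_id; apply: eq_in_imfset. Qed.

Lemma Pmor_comp_in (phi : T -> V) (psi : U -> V) (chi : T -> U)
    (X : {fset T}) :
  {in X, phi =1 psi \o chi} -> Pmor phi X = Pmor psi (Pmor chi X).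
Proof. by move=> phiE; rewrite /Pmor -imfset_comp; apply: eq_in_imfset. Qed.

End PowerSetFunctors.

Lemma omega_funE l p (f : 'I_l -> 'I_p) (i : 'I_l) : omega_fun f i = f i.
Proof. by rewrite /omega_fun valK. Qed.

Lemma omega_fun_lt l p (f : 'I_l -> 'I_p) i (il : (i < l)%N) :
  omega_fun f i = f (Ordinal il).
Proof. exact: (omega_funE f (Ordinal il)). Qed.

Lemma omega_fun_homo l p (f : 'I_l -> 'I_p) :
  {homo omega_fun f : i / i \in vn_ord l >-> i \in vn_ord p}.
Proof. by move=> i; rewrite !in_vn_ord => il; rewrite omega_fun_lt. Qed.

Lemma omega_fun_id l : omega_fun (@id 'I_l) =1 id.
Proof. by move=> i; rewrite /omega_fun; case: insubP => //= j _ ->. Qed.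

Lemma omega_fun_comp l p r (f : 'I_l -> 'I_p) (g : 'I_p -> 'I_r) :
  {in vn_ord l, omega_fun (g \o f) =1 omega_fun g \o omega_fun f}.
Proof.
by move=> i; rewrite in_vn_ord => il /=; rewrite !(omega_fun_lt _ il) omega_funE.
Qed.

Lemma card_G_obj l : #|` G_obj l| = (2 ^ (2 ^ l - 1))%N.
Proof. by rewrite /G_obj /Pobj card_fpowerset card_Pplus_obj card_vn_ord. Qed.

Lemma G_obj_inj : injective G_obj.
Proof.
move=> l m /(congr1 (fun A => #|` A|)) /eqP.
rewrite !card_G_obj eqn_exp2l // => /eqP /(congr1 succn).
by rewrite !subn1 !prednK ?expn_gt0 // => /eqP; rewrite eqn_exp2l // => /eqP.
Qed.

Lemma G_mor_homo l p (f : 'I_l -> 'I_p) :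
  {homo G_mor f : X / X \in G_obj l >-> X \in G_obj p}.
Proof. exact/Pmor_homo/Pplus_mor_homo/omega_fun_homo. Qed.

Lemma G_mor_id l : {in G_obj l, G_mor (@id 'I_l) =1 id}.
Proof.
move=> X _; apply: Pmor_id_in => Y _.
by rewrite Pplus_morE; apply: Pmor_id_in => i _; apply: omega_fun_id.
Qed.

Lemma G_mor_comp l p r (f : 'I_l -> 'I_p) (g : 'I_p -> 'I_r) :
  {in G_obj l, G_mor (g \o f) =1 G_mor g \o G_mor f}.
Proof.
move=> X; rewrite in_Pobj => /fsubsetP XA; apply: Pmor_comp_in => Y /XA.
rewrite in_Pplus_obj => /andP [/fsubsetP Yl _].
by rewrite !Pplus_morE; apply: Pmor_comp_in => i /Yl; apply: omega_fun_comp.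
Qed.

Lemma fset11_G_obj l (i : 'I_l) : [fset [fset nat_of_ord i]] \in G_obj l.
Proof.
rewrite in_Pobj fsub1set in_Pplus_obj fsub1set in_vn_ord ltn_ord.
by apply/fset0Pn; exists (nat_of_ord i); rewrite inE.
Qed.

Lemma G_mor_fset11 l p (f : 'I_l -> 'I_p) (i : 'I_l) :
  G_mor f [fset [fset nat_of_ord i]] = [fset [fset nat_of_ord (f i)]].
Proof. by rewrite /G_mor /Pmor /Pplus_mor !imfset_fset1 omega_funE. Qed.

Lemma G_mor_inj l p (f g : 'I_l -> 'I_p) :
  {in G_obj l, G_mor f =1 G_mor g} -> f =1 g.
Proof.
move=> fg i; have := fg _ (fset11_G_obj i); rewrite !G_mor_fset11.
by move/fset1_inj/fset1_inj/val_inj.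
Qed.

Theorem proposition3p1 :
  (* G is a functor Omega -> Sigma *)
  (forall (l p : nat) (f : 'I_l -> 'I_p),
      {in G_obj l, forall X, G_mor f X \in G_obj p}) /\
  (forall l : nat, {in G_obj l, G_mor (@id 'I_l) =1 id}) /\
  (forall (l p r : nat) (f : 'I_l -> 'I_p) (g : 'I_p -> 'I_r),
      {in G_obj l, G_mor (g \o f) =1 G_mor g \o G_mor f}) /\
  (* G is injective on objects *)
  (forall l m : nat, G_obj l = G_obj m -> l = m) /\
  (* G is injective on morphisms (same source and target; different ones are
     separated by injectivity on objects) *)
  (forall (l p : nat) (f g : 'I_l -> 'I_p),
      {in G_obj l, G_mor f =1 G_mor g} -> f =1 g) /\
  (* G Omega is not a monoidal subcategory of Sigma: its monoidal product
     G[l] \smile G[m] = G[l+m] is not (isomorphic to) the disjoint union nor the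
     cartesian product of G[l] and G[m] in Sigma *)
  (exists l m : nat,
      #|` G_obj (l + m)| <> (#|` G_obj l| + #|` G_obj m|)%N /\
      #|` G_obj (l + m)| <> (#|` G_obj l| * #|` G_obj m|)%N).
Proof.
split; first exact: G_mor_homo.
split; first exact: G_mor_id.
split; first exact: G_mor_comp.
split; first exact: G_obj_inj.
split; first exact: G_mor_inj.
by exists 1%N, 1%N; rewrite !card_G_obj.
Qed.
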